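(* Let $\gamma\in\mathcal{M}_k\otimes\mathcal{M}_m$ be a state and $W\in\mathcal{M}_k$ an orthogonal projection. Then $F_\gamma\circ G_\gamma(W\mathcal{M}_kW)\subseteq W\mathcal{M}_kW$ if and only if there is an orthogonal projection $V\in\mathcal{M}_m$ such that $\mathrm{tr}(\gamma(W\otimes V^\perp))=\mathrm{tr}(\gamma(W^\perp\otimes V))=0$.
   Context: $\mathcal{M}_k$ denotes the complex $k\times k$ matrices, and $\mathcal{M}_k\otimes\mathcal{M}_m$ is identified with $\mathcal{M}_{km}$ via the Kronecker product. A state is a positive semidefinite Hermitian matrix (not necessarily of trace one). For an orthogonal projection $W$, $W^\perp=\mathrm{Id}-W$, and $W\mathcal{M}_kW=\{WXW:X\in\mathcal{M}_k\}$. For $\gamma=\sum_{i=1}^n A_i\otimes B_i\in\mathcal{M}_k\otimes\mathcal{M}_m$ define $G_\gamma:\mathcal{M}_k\to\mathcal{M}_m$, $G_\gamma(X)=\sum_i\mathrm{tr}(A_iX)B_i$, and $F_\gamma:\mathcal{M}_m\to\mathcal{M}_k$, $F_\gamma(Y)=\sum_i\mathrm{tr}(B_iY)A_i$ (independent of the chosen decomposition). *)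

From HB Require Import structures.
From mathcomp Require Import all_boot all_order all_algebra.
From mathcomp Require Import complex mxtens.
From mathcomp Require Import reals.
Set Implicit Arguments. Unset Strict Implicit. Unset Printing Implicit Defensive.
Import Order.TTheory GRing.Theory Num.Theory.
Local Open Scope ring_scope.

Section Defs.
Variable C : numClosedFieldType.

Definition adjmx {p q} (A : 'M[C]_(p, q)) : 'M[C]_(q, p) :=
  \matrix_(i, j) (A j i)^*.

(* state: positive semidefinite Hermitian matrix (trace not normalised) *)
Definition is_state {n} (A : 'M[C]_n) : Prop :=
  adjmx A = A /\ forall v : 'cV[C]_n, 0 <= (adjmx v *m A *m v) 0 0.

Definition is_orth_proj {n} (W : 'M[C]_n) : Prop :=
  W *m W = W /\ adjmx W = W.

Definition in_corner {n} (W X : 'M[C]_n) : Prop :=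
  exists Y : 'M[C]_n, X = W *m Y *m W.

(* gamma = \sum_(i,j) delta_mx i j *t blk gamma i j  (Kronecker product,
   index (i,a) of M_k (x) M_m = M_(k*m) is mxtens_index (i,a) = i*m+a) *)
Definition blk {k m} (gamma : 'M[C]_(k * m)) (i j : 'I_k) : 'M[C]_m :=
  \matrix_(a, b) gamma (mxtens_index (i, a)) (mxtens_index (j, b)).

(* G_gamma(X) = sum tr(A_i X) B_i for the decomposition above *)
Definition Gmap {k m} (gamma : 'M[C]_(k * m)) (X : 'M[C]_k) : 'M[C]_m :=
  \sum_(i < k) \sum_(j < k) \tr (delta_mx i j *m X) *: blk gamma i j.

(* F_gamma(Y) = sum tr(B_i Y) A_i for the decomposition above *)
Definition Fmap {k m} (gamma : 'M[C]_(k * m)) (Y : 'M[C]_m) : 'M[C]_k :=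
  \sum_(i < k) \sum_(j < k) \tr (blk gamma i j *m Y) *: delta_mx i j.

End Defs.

From HB Require Import structures.
From mathcomp Require Import all_boot all_order all_algebra.
From mathcomp Require Import complex mxtens.
From mathcomp Require Import reals.
From mathcomp Require Import sesquilinear spectral.
Import Order.TTheory GRing.Theory Num.Theory.
Local Open Scope ring_scope.
Set Implicit Arguments. Unset Strict Implicit. Unset Printing Implicit Defensive.

(* Write the state as gamma = L^* L and reshape L (W (x) 1) into a matrix R
   with m columns whose Gram matrix R^* R is G_gamma(W).  If F_gamma(G_gamma(W))
   lies in the corner of W, the analogous reshaping R' of L (W^perp (x) 1)
   satisfies R' R^* = 0, so the projection V onto the row space of R fulfils
   both trace conditions.  Conversely, the two trace conditions say that gamma
   is not changed by compressing W (x) 1 or 1 (x) V to W (x) V; through the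
   trace duality tr(G_gamma(X) Y) = tr(gamma (X (x) Y)) = tr(F_gamma(Y) X)
   this makes G_gamma map the corner of W into the corner of V, and F_gamma
   the corner of V into the corner of W. *)

Section Adjoint.
Variable C : numClosedFieldType.

Lemma adjmx_trmxC p q (A : 'M[C]_(p, q)) : adjmx A = map_mx Num.conj (trmx A).
Proof. by apply/matrixP=> i j; rewrite !mxE. Qed.

Lemma adjmxK p q (A : 'M[C]_(p, q)) : adjmx (adjmx A) = A.
Proof. by apply/matrixP=> i j; rewrite !mxE conjCK. Qed.

Lemma adjmxM p q r (A : 'M[C]_(p, q)) (B : 'M[C]_(q, r)) :
  adjmx (A *m B) = adjmx B *m adjmx A.
Proof.
apply/matrixP=> i j; rewrite !mxE rmorph_sum; apply: eq_bigr => l _.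
by rewrite !mxE rmorphM mulrC.
Qed.

Lemma adjmxB p q (A B : 'M[C]_(p, q)) : adjmx (A - B) = adjmx A - adjmx B.
Proof. by apply/matrixP=> i j; rewrite !mxE rmorphB. Qed.

Lemma adjmx1 p : adjmx (1%:M : 'M[C]_p) = 1%:M.
Proof. by apply/matrixP=> i j; rewrite !mxE eq_sym; case: (_ == _); rewrite ?rmorph1 ?rmorph0. Qed.

Lemma adjmx_tens p q r s (A : 'M[C]_(p, q)) (B : 'M[C]_(r, s)) :
  adjmx (A *t B) = adjmx A *t adjmx B.
Proof. by apply/matrixP=> i j; rewrite !mxE rmorphM. Qed.

Lemma tensmxBr p q r s (A : 'M[C]_(p, q)) (B D : 'M[C]_(r, s)) :
  A *t (B - D) = A *t B - A *t D.
Proof. by apply/matrixP=> i j; rewrite !mxE mulrBr. Qed.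

Lemma tensmxBl p q r s (A D : 'M[C]_(p, q)) (B : 'M[C]_(r, s)) :
  (A - D) *t B = A *t B - D *t B.
Proof. by apply/matrixP=> i j; rewrite !mxE mulrBl. Qed.

Lemma mxtrace_mul_adj_eq0 p q (A : 'M[C]_(p, q)) : \tr (A *m adjmx A) = 0 -> A = 0.
Proof.
move=> trAA; apply/matrixP=> i j; rewrite mxE.
have entry_ge0 l t : 0 <= A l t * adjmx A t l by rewrite mxE mul_conjC_ge0.
have AAii : (A *m adjmx A) i i = 0.
  apply: (psumr_eq0P _ trAA) => // l _; rewrite mxE; exact: sumr_ge0.
rewrite mxE in AAii.
have /eqP := psumr_eq0P (fun t _ => entry_ge0 i t) AAii (i := j) isT.
by rewrite mxE mul_conjC_eq0 => /eqP.
Qed.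

Lemma mxtrace_mulmx_ext p q (A B : 'M[C]_(p, q)) :
  (forall D : 'M[C]_(q, p), \tr (A *m D) = \tr (B *m D)) -> A = B.
Proof.
move=> trAB; apply/matrixP=> i j; have := trAB (delta_mx j i).
rewrite /mxtrace (bigD1 i) //= [in RHS](bigD1 i) //= !big1.
- rewrite !mxE (bigD1 j) //= [in RHS](bigD1 j) //= !big1.
  + by rewrite !mxE !eqxx !mulr1 !addr0.
  + by move=> l /negbTE hl; rewrite !mxE hl mulr0.
  + by move=> l /negbTE hl; rewrite !mxE hl mulr0.
- by move=> l /negbTE hl; rewrite mxE big1 // => t _; rewrite mxE hl andbF mulr0.
- by move=> l /negbTE hl; rewrite mxE big1 // => t _; rewrite mxE hl andbF mulr0.
Qed.

Lemma mxtrace_sandwich n (A G X : 'M[C]_n) :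
  \tr (A *m G *m A *m X) = \tr (G *m (A *m X *m A)).
Proof. by rewrite -!mulmxA mxtrace_mulC -!mulmxA. Qed.

(* A = P^* diag(d) P with P unitary and d >= 0, so L := diag(sqrt d) P works. *)
Lemma state_factor n (A : 'M[C]_n) : is_state A -> exists L : 'M[C]_n, A = adjmx L *m L.
Proof.
move=> [Ah Apos].
have Aherm : A \is hermsymmx.
  rewrite is_hermitianmxE expr0 scale1r; apply/eqP/matrixP => i j.
  by rewrite -{1}Ah !mxE.
have /orthomx_spectralP := hermitian_normalmx Aherm.
set P := spectralmx A; set d := spectral_diag A => HA.
have Pu : P \is unitarymx by exact: spectral_unitarymx.
have Pinv : invmx P = adjmx P by rewrite (invmx_unitary Pu) adjmx_trmxC.
have PPa : P *m adjmx P = 1%:M by rewrite -Pinv mulmxV // unitarymx_unit.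
rewrite Pinv in HA.
have d_ge0 i : 0 <= d 0 i.
  have := Apos (adjmx (row i P)).
  rewrite adjmxK HA !mulmxA -row_mul PPa -!mulmxA.
  have -> : P *m adjmx (row i P) = adjmx (row i (1%:M : 'M[C]_n)).
    by rewrite -(adjmxK P) -adjmxM -row_mul adjmxK PPa.
  rewrite mulmxA -row_mul mul1mx mxE (bigD1 i) //= big1 ?addr0.
    by rewrite !mxE !eqxx mulr1n rmorph1 mulr1.
  by move=> l /negbTE hl; rewrite !mxE [i == l]eq_sym hl mulr0n mul0r.
exists (diag_mx (\row_j sqrtC (d 0 j)) *m P).
rewrite adjmxM HA -!mulmxA; congr (_ *m _); rewrite mulmxA; congr (_ *m _).
apply/matrixP => i j; rewrite !mxE (bigD1 i) //= big1 ?addr0.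
  rewrite !mxE eqxx mulr1n; have [->|hij] := eqVneq i j; last by rewrite !mulr0n mulr0.
  by rewrite !mulr1n geC0_conj ?sqrtC_ge0 // -expr2 sqrtCK.
by move=> l /negbTE hl; rewrite !mxE hl mulr0n rmorph0 mul0r.
Qed.

Lemma orth_proj_compl n (P : 'M[C]_n) : is_orth_proj P -> is_orth_proj (1%:M - P).
Proof.
move=> [PP Ph]; split; last by rewrite adjmxB adjmx1 Ph.
by rewrite mulmxBl mul1mx mulmxBr mulmx1 PP subrr subr0.
Qed.

Lemma orth_proj_tens p q (P : 'M[C]_p) (Q : 'M[C]_q) :
  is_orth_proj P -> is_orth_proj Q -> is_orth_proj (P *t Q).
Proof.
by move=> [PP Ph] [QQ Qh]; split; rewrite ?tensmx_mul ?PP ?QQ // adjmx_tens Ph Qh.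
Qed.

Lemma orth_proj_ortho p n (U : 'M[C]_(p, n)) : is_orth_proj (proj_ortho U).
Proof.
split; first exact: proj_ortho_proj.
have /orthomx1P Uperp := proj_ortho_compl_sub U (1%:M : 'M[C]_n).
have [X defP] := submxP (proj_ortho_sub U (1%:M : 'M[C]_n)).
rewrite !mul1mx in Uperp defP.
have P'Pa : (1%:M - proj_ortho U) *m adjmx (proj_ortho U) = 0.
  by rewrite {2}defP adjmxM mulmxA adjmx_trmxC Uperp mul0mx.
have Pa : adjmx (proj_ortho U) = proj_ortho U *m adjmx (proj_ortho U).
  by apply/eqP; rewrite -subr_eq0 -{1}(mul1mx (adjmx _)) -mulmxBl P'Pa.
by rewrite Pa -{1}(adjmxK (proj_ortho U)) -adjmxM -Pa adjmxK.
Qed.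

Lemma state_mul_proj_eq0 n (gamma P : 'M[C]_n) :
  is_state gamma -> is_orth_proj P -> \tr (gamma *m P) = 0 -> gamma *m P = 0.
Proof.
move=> /state_factor[L ->] [PP Ph] tr0.
suff LP0 : L *m P = 0 by rewrite -mulmxA LP0 mulmx0.
apply: mxtrace_mul_adj_eq0.
by rewrite adjmxM Ph mulmxA -(mulmxA L) PP mxtrace_mulC mulmxA.
Qed.

Lemma herm_mul_sandwich n (G A B : 'M[C]_n) :
  adjmx G = G -> adjmx A = A -> adjmx B = B -> G *m A = G *m B ->
  A *m G *m A = B *m G *m B.
Proof.
move=> Gh Ah Bh GAB.
have AG : A *m G = B *m G by rewrite -Gh -{1}Ah -{1}Bh -!adjmxM GAB.
by rewrite -mulmxA GAB mulmxA AG.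
Qed.

End Adjoint.

Section Tensor.
Variable C : numClosedFieldType.

Lemma sum_mxtens_index (k m : nat) (F : 'I_(k * m) -> C) :
  \sum_(p : 'I_(k * m)) F p = \sum_(i < k) \sum_(a < m) F (mxtens_index (i, a)).
Proof.
rewrite (reindex (@mxtens_index k m)) /=; last first.
  by apply: onW_bij; exists (@mxtens_unindex k m); [exact: mxtens_indexK|exact: mxtens_unindexK].
by rewrite pair_big /=; apply: eq_bigr => [[i a]] _.
Qed.

Lemma mxtrace_delta n (i j : 'I_n) (X : 'M[C]_n) : \tr (delta_mx i j *m X) = X j i.
Proof.
rewrite /mxtrace (bigD1 i) //= big1 ?addr0.
  rewrite mxE (bigD1 j) //= big1 ?addr0; first by rewrite !mxE !eqxx mul1r.
  by move=> l /negbTE hl; rewrite !mxE hl andbF mul0r.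
move=> l /negbTE hl; rewrite mxE big1 // => t _.
by rewrite mxE [l == i]hl mul0r.
Qed.

Variables k m : nat.

Lemma mxtrace_Gmap (gamma : 'M[C]_(k * m)) (X : 'M[C]_k) (Y : 'M[C]_m) :
  \tr (Gmap gamma X *m Y) = \tr (gamma *m (X *t Y)).
Proof.
rewrite /Gmap mulmx_suml raddf_sum /=.
under eq_bigr do rewrite mulmx_suml raddf_sum /=.
under eq_bigr do under eq_bigr do rewrite -scalemxAl mxtraceZ mxtrace_delta.
rewrite /mxtrace sum_mxtens_index; apply: eq_bigr => i _.
under [RHS]eq_bigr => a _ do rewrite mxE sum_mxtens_index.
rewrite exchange_big; apply: eq_bigr => j _.
rewrite mulr_sumr; apply: eq_bigr => a _.
rewrite mxE mulr_sumr; apply: eq_bigr => b _.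
by rewrite (tensmxE X Y j (b : 'I_m) i a) [blk _ _ _ _ _]mxE mulrCA.
Qed.

Lemma mxtrace_Fmap (gamma : 'M[C]_(k * m)) (X : 'M[C]_k) (Y : 'M[C]_m) :
  \tr (Fmap gamma Y *m X) = \tr (gamma *m (X *t Y)).
Proof.
rewrite -mxtrace_Gmap /Fmap /Gmap !mulmx_suml !raddf_sum; apply: eq_bigr => i _.
rewrite !mulmx_suml !raddf_sum; apply: eq_bigr => j _ /=.
by rewrite -!scalemxAl !mxtraceZ mxtrace_delta mulrC.
Qed.

(* Row r of K : 'M_(n, k * m) splits into k blocks of length m; [blockrows K]
   has these blocks as its rows, row (r, i) being block i of row r. *)
Definition blockrows n (K : 'M[C]_(n, k * m)) : 'M[C]_(n * k, m) :=
  \matrix_(q, b) K (mxtens_unindex q).1 (mxtens_index ((mxtens_unindex q).2, b)).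

Lemma blockrowsE n (K : 'M[C]_(n, k * m)) r i b :
  blockrows K (mxtens_index (r, i)) b = K r (mxtens_index (i, b)).
Proof. by rewrite mxE mxtens_indexK. Qed.

Lemma blockrows_mul_tens1 n (K : 'M[C]_(n, k * m)) (Y : 'M[C]_m) :
  blockrows (K *m (1%:M *t Y)) = blockrows K *m Y.
Proof.
apply/matrixP => q b; case: (mxtens_indexP q) => r j.
rewrite blockrowsE [LHS]mxE [RHS]mxE sum_mxtens_index (bigD1 j) //=.
rewrite [X in _ + X]big1 ?addr0.
  apply: eq_bigr => a _; rewrite blockrowsE.
  by rewrite (tensmxE (1%:M : 'M[C]_k) Y j a j b) [1%:M _ _]mxE eqxx mul1r.
move=> i /negbTE hi; rewrite big1 // => a _.
by rewrite (tensmxE (1%:M : 'M[C]_k) Y i a j b) [1%:M _ _]mxE hi mul0r mulr0.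
Qed.

Lemma mxtrace_blockrows n (A B : 'M[C]_(n, k * m)) :
  \tr (A *m adjmx B) = \tr (blockrows A *m adjmx (blockrows B)).
Proof.
rewrite /mxtrace (@sum_mxtens_index n k); apply: eq_bigr => r _.
rewrite [LHS]mxE sum_mxtens_index; apply: eq_bigr => j _.
rewrite [RHS]mxE; apply: eq_bigr => b _.
by rewrite [adjmx B _ _]mxE [adjmx (blockrows B) _ _]mxE !blockrowsE.
Qed.

Lemma mxtrace_factor_tens n (L : 'M[C]_(n, k * m)) (P : 'M[C]_k) (Y : 'M[C]_m) :
  is_orth_proj P ->
  \tr (adjmx L *m L *m (P *t Y)) =
  \tr (blockrows (L *m (P *t 1%:M)) *m Y *m adjmx (blockrows (L *m (P *t 1%:M)))).
Proof.
move=> [PP Ph]; set K := L *m (P *t 1%:M).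
have -> : P *t Y = (P *t 1%:M) *m (1%:M *t Y) *m (P *t 1%:M).
  by rewrite !tensmx_mul mulmx1 PP mul1mx mulmx1.
have -> : adjmx L *m L *m ((P *t 1%:M) *m (1%:M *t Y) *m (P *t 1%:M)) =
    adjmx L *m (K *m (1%:M *t Y) *m (P *t 1%:M)) by rewrite !mulmxA.
rewrite mxtrace_mulC -!(mulmxA K) -(mulmxA (1%:M *t Y)).
have -> : (P *t 1%:M) *m adjmx L = adjmx K by rewrite adjmxM adjmx_tens Ph adjmx1.
by rewrite (mulmxA K) mxtrace_blockrows blockrows_mul_tens1.
Qed.

End Tensor.

Section Corners.
Variables (C : numClosedFieldType) (k m : nat) (gamma : 'M[C]_(k * m)).
Variables (P : 'M[C]_k) (Q : 'M[C]_m).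
Hypotheses (gamma_herm : adjmx gamma = gamma) (P_herm : adjmx P = P) (Q_herm : adjmx Q = Q).

Let herm_tens p q (A : 'M[C]_p) (B : 'M[C]_q) :
  adjmx A = A -> adjmx B = B -> adjmx (A *t B) = A *t B.
Proof. by move=> Ah Bh; rewrite adjmx_tens Ah Bh. Qed.

Lemma Gmap_corner (X : 'M[C]_k) :
  gamma *m (P *t 1%:M) = gamma *m (P *t Q) ->
  Gmap gamma (P *m X *m P) = Q *m Gmap gamma (P *m X *m P) *m Q.
Proof.
move=> gammaPQ; apply: mxtrace_mulmx_ext => Y.
rewrite mxtrace_sandwich !mxtrace_Gmap.
have -> : P *m X *m P *t Y = (P *t 1%:M) *m (X *t Y) *m (P *t 1%:M).
  by rewrite !tensmx_mul mulmx1 mul1mx.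
have -> : P *m X *m P *t (Q *m Y *m Q) = (P *t Q) *m (X *t Y) *m (P *t Q).
  by rewrite !tensmx_mul.
by rewrite -!mxtrace_sandwich (herm_mul_sandwich gamma_herm _ _ gammaPQ) ?herm_tens ?adjmx1.
Qed.

Lemma Fmap_corner (Z : 'M[C]_m) :
  gamma *m (1%:M *t Q) = gamma *m (P *t Q) ->
  Fmap gamma (Q *m Z *m Q) = P *m Fmap gamma (Q *m Z *m Q) *m P.
Proof.
move=> gammaPQ; apply: mxtrace_mulmx_ext => X.
rewrite mxtrace_sandwich !mxtrace_Fmap.
have -> : X *t (Q *m Z *m Q) = (1%:M *t Q) *m (X *t Z) *m (1%:M *t Q).
  by rewrite !tensmx_mul mulmx1 mul1mx.
have -> : P *m X *m P *t (Q *m Z *m Q) = (P *t Q) *m (X *t Z) *m (P *t Q).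
  by rewrite !tensmx_mul.
by rewrite -!mxtrace_sandwich (herm_mul_sandwich gamma_herm _ _ gammaPQ) ?herm_tens ?adjmx1.
Qed.

End Corners.

Section Characterisation.
Variables (C : numClosedFieldType) (k m : nat) (gamma : 'M[C]_(k * m)) (W : 'M[C]_k).
Hypotheses (gamma_state : is_state gamma) (W_proj : is_orth_proj W).

Lemma corner_stable_of_trace_eq0 (V : 'M[C]_m) :
  is_orth_proj V ->
  \tr (gamma *m (W *t (1%:M - V))) = 0 -> \tr (gamma *m ((1%:M - W) *t V)) = 0 ->
  forall X, in_corner W X -> in_corner W (Fmap gamma (Gmap gamma X)).
Proof.
move=> V_proj trWV' trW'V _ [Y ->].
have W'_proj := orth_proj_compl W_proj; have V'_proj := orth_proj_compl V_proj.
have gammaW1 : gamma *m (W *t 1%:M) = gamma *m (W *t V).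
  apply/eqP; rewrite -subr_eq0 -mulmxBr -tensmxBr.
  by apply/eqP/state_mul_proj_eq0 => //; exact: orth_proj_tens.
have gamma1V : gamma *m (1%:M *t V) = gamma *m (W *t V).
  apply/eqP; rewrite -subr_eq0 -mulmxBr -tensmxBl.
  by apply/eqP/state_mul_proj_eq0 => //; exact: orth_proj_tens.
have [[gamma_herm _] [_ W_herm] [_ V_herm]] := And3 gamma_state W_proj V_proj.
rewrite (Gmap_corner gamma_herm W_herm V_herm _ gammaW1).
by rewrite (Fmap_corner gamma_herm W_herm V_herm _ gamma1V); eexists.
Qed.

Lemma trace_eq0_of_corner_stable :
  in_corner W (Fmap gamma (Gmap gamma W)) ->
  exists V : 'M[C]_m, is_orth_proj V /\
    \tr (gamma *m (W *t (1%:M - V))) = 0 /\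
    \tr (gamma *m ((1%:M - W) *t V)) = 0.
Proof.
move=> [Y FGW]; have [L defgamma] := state_factor gamma_state.
have [WW _] := W_proj.
set R := blockrows (L *m (W *t 1%:M)).
set R' := blockrows (L *m ((1%:M - W) *t 1%:M)).
have trW Z : \tr (gamma *m (W *t Z)) = \tr (R *m Z *m adjmx R).
  by rewrite defgamma mxtrace_factor_tens.
have trW' Z : \tr (gamma *m ((1%:M - W) *t Z)) = \tr (R' *m Z *m adjmx R').
  by rewrite defgamma mxtrace_factor_tens //; exact: orth_proj_compl.
have GW : Gmap gamma W = adjmx R *m R.
  by apply: mxtrace_mulmx_ext => Z; rewrite mxtrace_Gmap trW mxtrace_mulC mulmxA.
have R'R : R' *m adjmx R = 0.
  apply: mxtrace_mul_adj_eq0.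
  rewrite adjmxM adjmxK !mulmxA -(mulmxA R') -GW -trW' -mxtrace_Fmap FGW.
  by rewrite mulmxBr mulmx1 -!mulmxA WW subrr mxtrace0.
exists (proj_ortho R); split; first exact: orth_proj_ortho.
have RV : R *m proj_ortho R = R := proj_ortho_id (submx_refl R).
have R'V : R' *m proj_ortho R = 0.
  by apply: proj_ortho_0; apply/orthomx1P; rewrite -adjmx_trmxC.
by rewrite trW trW' mulmxBr mulmx1 RV subrr R'V !mul0mx mxtrace0.
Qed.

End Characterisation.

Theorem mainTheorem2 (R : realType) (k m : nat)
  (gamma : 'M[R[i]]_(k * m)) (W : 'M[R[i]]_k) :
  is_state gamma -> is_orth_proj W ->
  ((forall X : 'M[R[i]]_k, in_corner W X -> in_corner W (Fmap gamma (Gmap gamma X)))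
   <->
   exists V : 'M[R[i]]_m, is_orth_proj V /\
     \tr (gamma *m (W *t (1%:M - V))) = 0 /\
     \tr (gamma *m ((1%:M - W) *t V)) = 0).
Proof.
move=> gamma_state W_proj; split => [stable | [V [V_proj [trWV' trW'V]]]].
- apply: trace_eq0_of_corner_stable => //; apply: stable.
  by exists 1%:M; rewrite mulmx1 W_proj.1.
- exact: corner_stable_of_trace_eq0 V_proj trWV' trW'V.
Qed.
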